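(* Let $\mathbf F$ be a nonincreasing foliage tree and $\varphi$ a consistent family of foliage grafts for $\mathbf F$ such that $\mathrm{fhybr}(\mathbf F,\varphi)$ has nonempty leaves and each $\mathbf G\in\varphi$ preserves shoots of $\mathbf F$. Then $\mathrm{fhybr}(\mathbf F,\varphi)$ shoots into $\mathbf F$.
   Context: Trees: a tree is a pair $(Q,<)$ with $<$ irreflexive transitive and predecessor sets well-ordered; $\parallel$ = incomparable; $\mathrm{sons}(x)$ = immediate successors; $\max$ = maximal nodes; $0$ = least node; $A{\downarrow}=\{v:\exists a\in A\ a\le v\}$; for an antichain $A$ and $x\in A{\downarrow}$, $\mathrm{root}(x,A)$ is the unique $r\in A$ with $r\le x$. A graft for a tree $\mathcal T$ is a tree $\mathcal G$ with more than one node, least node $0_{\mathcal G}\in\mathrm{nodes}\,\mathcal T$, $\max\mathcal G\subseteq\{v\in\mathrm{nodes}\,\mathcal T:v>_{\mathcal T}0_{\mathcal G}\}$ an antichain in $\mathcal T$, and $\mathrm{impl}\,\mathcal G:=\mathrm{nodes}\,\mathcal G\setminus(\{0_{\mathcal G}\}\cup\max\mathcal G)$ disjoint from $\mathrm{nodes}\,\mathcal T$; $\mathrm{expl}(\mathcal T,\mathcal G)=\{v:v>_{\mathcal T}0_{\mathcal G}\}\setminus(\max\mathcal G){\downarrow}_{\mathcal T}$. A consistent family $\gamma$ of grafts for $\mathcal T$: members are grafts with pairwise disjoint implants, and for distinct $\mathcal D,\mathcal E$: $0_{\mathcal D}\parallel_{\mathcal T}0_{\mathcal E}$ or $0_{\mathcal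 D}\in(\max\mathcal E){\downarrow}_{\mathcal T}$ or $0_{\mathcal E}\in(\max\mathcal D){\downarrow}_{\mathcal T}$. $\mathrm{supp}(\mathcal T,\gamma)=\mathrm{nodes}\,\mathcal T\setminus\bigcup_{\mathcal G\in\gamma}\mathrm{expl}(\mathcal T,\mathcal G)$. $\mathrm{hybr}(\mathcal T,\gamma)$ is the tree on $\mathrm{supp}(\mathcal T,\gamma)\cup\bigcup_{\mathcal G\in\gamma}\mathrm{impl}\,\mathcal G$ with $x<y$ iff: (b1) $x,y\in\mathrm{supp}$, $x<_{\mathcal T}y$; (b2) $x,y\in\mathrm{impl}\,\mathcal G$, $x<_{\mathcal G}y$; (b3) $x\in\mathrm{supp}$, $y\in\mathrm{impl}\,\mathcal G$, $x\le_{\mathcal T}0_{\mathcal G}$; (b4) $x\in\mathrm{impl}\,\mathcal G$, $y\in\mathrm{supp}\cap(\max\mathcal G){\downarrow}_{\mathcal T}$, $x<_{\mathcal G}\mathrm{root}_{\mathcal T}(y,\max\mathcal G)$; or (b5) $x\in\mathrm{impl}\,\mathcal D$, $y\in\mathrm{impl}\,\mathcal E$ ($\mathcal D\ne\mathcal E$), $0_{\mathcal E}\in(\max\mathcal D){\downarrow}_{\mathcal T}$, $x<_{\mathcal D}\mathrm{root}_{\mathcal T}(0_{\mathcal E},\max\mathcal D)$. Foliage trees: $\mathbf F=(\mathcal T,l)$ with skeleton $\mathcal T$ and leaves $\mathbf F_x=l(x)$; nonincreasing: $x\le y\Rightarrow\mathbf F_y\subseteq\mathbf F_x$; nonempty leaves: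 every leaf nonempty; $\mathrm{flesh}\,\mathbf F=\bigcup_x\mathbf F_x$; $\mathrm{shoot}_{\mathbf F}(z)=\{\bigcup_{s\in C}\mathbf F_s:C$ cofinite subset of $\mathrm{sons}(z)\}$; $\mathrm{scope}_{\mathbf F}(p)=\{y:p\in\mathbf F_y\}$; $\gamma\gg\delta$ means every nonempty $D\in\delta$ contains some nonempty $G\in\gamma$. A foliage graft for nonincreasing $\mathbf F$ is a nonincreasing foliage tree $\mathbf G$ with skeleton a graft for the skeleton of $\mathbf F$, $\mathbf G_{0_{\mathbf G}}\subseteq\mathbf F_{0_{\mathbf G}}$, and $\mathbf G_m=\mathbf F_m$ for $m\in\max\mathbf G$; $\mathrm{cut}(\mathbf F,\mathbf G)=\mathbf F_{0_{\mathbf G}}\setminus\mathbf G_{0_{\mathbf G}}$; $\mathrm{impl}\,\mathbf G$, $\mathrm{expl}(\mathbf F,\mathbf G)$ refer to skeletons. $\varphi$ is a consistent family of foliage grafts for $\mathbf F$ if its members are foliage grafts for $\mathbf F$ with pairwise distinct skeletons forming a consistent family of grafts for the skeleton of $\mathbf F$; $\mathrm{loss}(\mathbf F,\varphi)=\bigcup_{\mathbf G\in\varphi}\mathrm{cut}(\mathbf F,\mathbf G)$; $\mathrm{supp}(\mathbf F,\varphi)$ is the support of the skeleton of $\mathbf F$ for the family of skeletons. $\mathrm{fhybr}(\mathbf F,\varphi)$ is the foliage tree $\mathbf H$ whose skeleton is the hybrid of the skeleton of $\mathbf F$ and the skeletons of members of $\varphi$, with leaves $\mathbf H_x=\mathbf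 G_x\setminus\mathrm{loss}(\mathbf F,\varphi)$ if $x\in\mathrm{impl}\,\mathbf G$, $\mathbf G\in\varphi$, and $\mathbf H_x=\mathbf F_x\setminus\mathrm{loss}(\mathbf F,\varphi)$ if $x\in\mathrm{supp}(\mathbf F,\varphi)$. A foliage graft $\mathbf G$ preserves shoots of $\mathbf F$ iff for each $p\in\mathrm{flesh}\,\mathbf G$ and each $y\in\mathrm{scope}_{\mathbf F}(p)\cap(\{0_{\mathbf G}\}\cup\mathrm{expl}(\mathbf F,\mathbf G))$ there is $x\in\mathrm{scope}_{\mathbf G}(p)\cap(\{0_{\mathbf G}\}\cup\mathrm{impl}\,\mathbf G)$ with $\mathrm{shoot}_{\mathbf G}(x)\gg\mathrm{shoot}_{\mathbf F}(y)$. $\mathbf H$ shoots into $\mathbf F$ iff for every $p\in\mathrm{flesh}\,\mathbf H$ and every $y\in\mathrm{scope}_{\mathbf F}(p)$ there is $x\in\mathrm{scope}_{\mathbf H}(p)$ with $\mathrm{shoot}_{\mathbf H}(x)\gg\mathrm{shoot}_{\mathbf F}(y)$. *)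

From Stdlib Require Import List Classical.
Set Implicit Arguments.

Record Tree (V : Type) := mkTree { nodes : V -> Prop; tlt : V -> V -> Prop }.

Section Trees.
Variable V : Type.
Implicit Types (T G : Tree V) (x y z r v m : V) (A : V -> Prop).

Definition tle T x y : Prop := x = y \/ tlt T x y.

Definition is_tree T : Prop :=
  (forall x y, tlt T x y -> nodes T x /\ nodes T y) /\
  (forall x, ~ tlt T x x) /\
  (forall x y z, tlt T x y -> tlt T y z -> tlt T x z) /\
  (forall x, nodes T x ->
     (forall y z, tlt T y x -> tlt T z x -> y = z \/ tlt T y z \/ tlt T z y) /\
     (forall S : V -> Prop, (forall y, S y -> tlt T y x) -> (exists y, S y) ->
        exists m, S m /\ forall y, S y -> tle T m y)).

Definition par T x y : Prop :=
  nodes T x /\ nodes T y /\ ~ tle T x y /\ ~ tle T y x.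

Definition sons T z s : Prop :=
  nodes T s /\ tlt T z s /\ ~ (exists w, tlt T z w /\ tlt T w s).

Definition maxn T m : Prop := nodes T m /\ ~ (exists y, tlt T m y).

Definition is_least T r : Prop := nodes T r /\ forall x, nodes T x -> tle T r x.

Definition upset T A v : Prop := nodes T v /\ exists a, A a /\ tle T a v.

Definition antichain T A : Prop :=
  forall x y, A x -> A y -> x <> y -> par T x y.

Definition impl G g0 x : Prop := nodes G x /\ x <> g0 /\ ~ maxn G x.

Definition is_graft T G g0 : Prop :=
  is_tree G /\
  (exists x y, nodes G x /\ nodes G y /\ x <> y) /\
  is_least G g0 /\
  nodes T g0 /\
  (forall m, maxn G m -> nodes T m /\ tlt T g0 m) /\
  antichain T (maxn G) /\
  (forall x, impl G g0 x -> ~ nodes T x).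

Definition expl T G g0 v : Prop := tlt T g0 v /\ ~ upset T (maxn G) v.

Definition consistent_fam T (I : Type) (gs : I -> Tree V) (rs : I -> V) : Prop :=
  (forall i, is_graft T (gs i) (rs i)) /\
  (forall i j, i <> j ->
     (forall x, impl (gs i) (rs i) x -> impl (gs j) (rs j) x -> False) /\
     (par T (rs i) (rs j) \/ upset T (maxn (gs j)) (rs i)
                          \/ upset T (maxn (gs i)) (rs j))).

Definition supp T (I : Type) (gs : I -> Tree V) (rs : I -> V) x : Prop :=
  nodes T x /\ ~ (exists i, expl T (gs i) (rs i) x).

Definition hybr T (I : Type) (gs : I -> Tree V) (rs : I -> V) : Tree V :=
  {| nodes := fun x => supp T gs rs x \/ exists i, impl (gs i) (rs i) x;
     tlt := fun x y =>
       (supp T gs rs x /\ supp T gs rs y /\ tlt T x y)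
       \/ (exists i, impl (gs i) (rs i) x /\ impl (gs i) (rs i) y
                              /\ tlt (gs i) x y)
       \/ (exists i, supp T gs rs x /\ impl (gs i) (rs i) y /\ tle T x (rs i))
       \/ (exists i, impl (gs i) (rs i) x /\ supp T gs rs y
                      /\ upset T (maxn (gs i)) y
                      /\ exists r, maxn (gs i) r /\ tle T r y /\ tlt (gs i) x r)
       \/ (exists i j, i <> j /\ impl (gs i) (rs i) x /\ impl (gs j) (rs j) y
                      /\ upset T (maxn (gs i)) (rs j)
                      /\ exists r, maxn (gs i) r /\ tle T r (rs j) /\ tlt (gs i) x r) |}.

End Trees.

Record FTree (V P : Type) := mkFTree { skel : Tree V; leaf : V -> P -> Prop }.

(** a foliage graft together with its least node *)
Record FGraft (V P : Type) := mkFGraft { fgt : FTree V P; fg0 : V }.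

Section Foliage.
Variables V P : Type.
Implicit Types (F G H : FTree V P) (x y z : V) (p : P).

Definition finite_set (S : V -> Prop) : Prop := exists l : list V, forall x, S x -> In x l.

Definition nonincreasing F : Prop :=
  forall x y, nodes (skel F) x -> nodes (skel F) y -> tle (skel F) x y ->
    forall p, leaf F y p -> leaf F x p.

Definition nonempty_leaves F : Prop :=
  forall x, nodes (skel F) x -> exists p, leaf F x p.

Definition flesh F p : Prop := exists x, nodes (skel F) x /\ leaf F x p.

Definition shoot F z (D : P -> Prop) : Prop :=
  exists C : V -> Prop,
    (forall s, C s -> sons (skel F) z s) /\
    finite_set (fun s => sons (skel F) z s /\ ~ C s) /\
    (forall p, D p <-> exists s, C s /\ leaf F s p).

Definition scope F p y : Prop := nodes (skel F) y /\ leaf F y p.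

Definition gg (gam del : (P -> Prop) -> Prop) : Prop :=
  forall D, del D -> (exists p, D p) ->
    exists E, gam E /\ (exists p, E p) /\ (forall p, E p -> D p).

Definition is_fgraft F (G : FGraft V P) : Prop :=
  nonincreasing (fgt G) /\
  is_graft (skel F) (skel (fgt G)) (fg0 G) /\
  (forall p, leaf (fgt G) (fg0 G) p -> leaf F (fg0 G) p) /\
  (forall m, maxn (skel (fgt G)) m -> forall p, leaf (fgt G) m p <-> leaf F m p).

Definition cut F (G : FGraft V P) p : Prop :=
  leaf F (fg0 G) p /\ ~ leaf (fgt G) (fg0 G) p.

Definition consistent_ffam F (I : Type) (phi : I -> FGraft V P) : Prop :=
  (forall i, is_fgraft F (phi i)) /\
  (forall i j, i <> j -> skel (fgt (phi i)) <> skel (fgt (phi j))) /\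
  consistent_fam (skel F) (fun i => skel (fgt (phi i))) (fun i => fg0 (phi i)).

Definition loss F (I : Type) (phi : I -> FGraft V P) p : Prop :=
  exists i, cut F (phi i) p.

Definition fsupp F (I : Type) (phi : I -> FGraft V P) x : Prop :=
  supp (skel F) (fun i => skel (fgt (phi i))) (fun i => fg0 (phi i)) x.

Definition fhybr F (I : Type) (phi : I -> FGraft V P) : FTree V P :=
  {| skel := hybr (skel F) (fun i => skel (fgt (phi i))) (fun i => fg0 (phi i));
     leaf := fun x p =>
       ((exists i, impl (skel (fgt (phi i))) (fg0 (phi i)) x /\ leaf (fgt (phi i)) x p)
        \/ (fsupp F phi x /\ leaf F x p))
       /\ ~ loss F phi p |}.

Definition preserves_shoots F (G : FGraft V P) : Prop :=
  forall p, flesh (fgt G) p ->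
  forall y, scope F p y -> (y = fg0 G \/ expl (skel F) (skel (fgt G)) (fg0 G) y) ->
    exists x, scope (fgt G) p x /\
              (x = fg0 G \/ impl (skel (fgt G)) (fg0 G) x) /\
              gg (shoot (fgt G) x) (shoot F y).

Definition shoots_into H F : Prop :=
  forall p, flesh H p -> forall y, scope F p y ->
    exists x, scope H p x /\ gg (shoot H x) (shoot F y).

End Foliage.

(* Let p be a point of the hybrid and y a node of F whose leaf contains p.
   If y is the root of a graft G or explanted by it, then p lies below the root
   of G in F and survives the cut there, so p is in the flesh of G and shoot
   preservation yields a node x of G (its root or an implant) whose shoot refines
   that of y.  Otherwise y stays in the support and we take x = y.  In both cases
   the sons of x in the hybrid are exactly its sons in G (resp. in F) and the
   hybrid leaves are contained in the corresponding leaves; since hybrid leaves are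
   nonempty, every shoot of x in G (resp. F) is refined by a shoot in the hybrid. *)

From Stdlib Require Import Classical.

Section TreeOrder.
Context {V : Type} {t : Tree V} (Ht : is_tree t).

Lemma tlt_nodes {x y} : tlt t x y -> nodes t x /\ nodes t y.
Proof. destruct Ht as [Hn _]; apply Hn. Qed.

Lemma tlt_irrefl {x} : ~ tlt t x x.
Proof. destruct Ht as [_ [Hn _]]; apply Hn. Qed.

Lemma tlt_trans {x y z} : tlt t x y -> tlt t y z -> tlt t x z.
Proof. destruct Ht as [_ [_ [Hn _]]]; apply Hn. Qed.

Lemma tle_tlt_trans {x y z} : tle t x y -> tlt t y z -> tlt t x z.
Proof. intros [<-|Hxy] Hyz; [exact Hyz | exact (tlt_trans Hxy Hyz)]. Qed.

Lemma tlt_tle_trans {x y z} : tlt t x y -> tle t y z -> tlt t x z.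
Proof. intros Hxy [<-|Hyz]; [exact Hxy | exact (tlt_trans Hxy Hyz)]. Qed.

Lemma tle_trans {x y z} : tle t x y -> tle t y z -> tle t x z.
Proof. intros [<-|Hxy] Hyz; [exact Hyz | right; exact (tlt_tle_trans Hxy Hyz)]. Qed.

Lemma tlt_tle_asym {x y} : tlt t x y -> ~ tle t y x.
Proof. intros Hxy Hyx. exact (tlt_irrefl (tlt_tle_trans Hxy Hyx)). Qed.

Lemma tlt_below_total {a b x} : tlt t a x -> tlt t b x -> a = b \/ tlt t a b \/ tlt t b a.
Proof.
  intros Ha Hb. destruct Ht as [_ [_ [_ Hw]]].
  apply (Hw x (proj2 (tlt_nodes Ha))); assumption.
Qed.

End TreeOrder.

Section Shoots.
Context {V P : Type}.

Lemma gg_trans (A B C : (P -> Prop) -> Prop) : gg A B -> gg B C -> gg A C.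
Proof.
  intros HAB HBC D HD [p Dp].
  destruct (HBC D HD (ex_intro _ p Dp)) as [E [HE [En ED]]].
  destruct (HAB E HE En) as [E' [HE' [En' EE']]].
  exists E'. repeat split; auto.
Qed.

(* The refining shoot of [Hf] is taken over the same cofinite set of sons. *)
Lemma shoot_gg_of_sons (Hf Kf : FTree V P) z :
  (forall s, sons (skel Hf) z s <-> sons (skel Kf) z s) ->
  (forall s p, sons (skel Kf) z s -> leaf Hf s p -> leaf Kf s p) ->
  (forall s, sons (skel Hf) z s -> exists p, leaf Hf s p) ->
  gg (shoot Hf z) (shoot Kf z).
Proof.
  intros Hsons Hleaf Hne D [C [HC [[l Hfin] HD]]] [p Dp].
  apply HD in Dp. destruct Dp as [s0 [Cs0 _]].
  exists (fun q => exists s, C s /\ leaf Hf s q). split; [|split].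
  - exists C. split; [|split].
    + intros s Cs. apply Hsons, HC, Cs.
    + exists l. intros s [Hs HnC]. apply Hfin. split; [apply Hsons, Hs | exact HnC].
    + tauto.
  - destruct (Hne s0 (proj2 (Hsons s0) (HC s0 Cs0))) as [q Hq]. exists q, s0. auto.
  - intros q [s [Cs Hq]]. apply HD. exists s. split; [exact Cs|].
    exact (Hleaf s q (HC s Cs) Hq).
Qed.

End Shoots.

Section Hybrid.
Context {V P : Type} {F : FTree V P} {I : Type} {phi : I -> FGraft V P}.
Hypothesis HT : is_tree (skel F).
Hypothesis Hc : consistent_ffam F phi.

Local Notation T := (skel F).
Local Notation G i := (skel (fgt (phi i))).
Local Notation r i := (fg0 (phi i)).
Local Notation S := (supp (skel F) (fun i => skel (fgt (phi i))) (fun i => fg0 (phi i))).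
Local Notation Imp i := (impl (skel (fgt (phi i))) (fg0 (phi i))).
Local Notation H := (hybr (skel F) (fun i => skel (fgt (phi i))) (fun i => fg0 (phi i))).

Lemma graft_of i : is_graft T (G i) (r i).
Proof. destruct Hc as [_ [_ [Hg _]]]. exact (Hg i). Qed.

Lemma graft_tree i : is_tree (G i).
Proof. apply (graft_of i). Qed.

Lemma graft_root_le i x : nodes (G i) x -> tle (G i) (r i) x.
Proof. destruct (graft_of i) as [_ [_ [[_ Hl] _]]]. apply Hl. Qed.

Lemma graft_root_node i : nodes (G i) (r i).
Proof. destruct (graft_of i) as [_ [_ [[Hr _] _]]]. exact Hr. Qed.

Lemma root_node i : nodes T (r i).
Proof. destruct (graft_of i) as [_ [_ [_ [Hr _]]]]. exact Hr. Qed.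

Lemma root_lt_max i m : maxn (G i) m -> tlt T (r i) m.
Proof. destruct (graft_of i) as [_ [_ [_ [_ [Hm _]]]]]. intro Mm. apply (Hm m Mm). Qed.

Lemma max_le_max i a b : maxn (G i) a -> maxn (G i) b -> tle T a b -> a = b.
Proof.
  intros Ma Mb Hab. apply NNPP. intro Hne.
  destruct (graft_of i) as [_ [_ [_ [_ [_ [Hanti _]]]]]].
  destruct (Hanti a b Ma Mb Hne) as [_ [_ [Hn _]]]. exact (Hn Hab).
Qed.

Lemma max_le_lt_max i m s z : maxn (G i) m -> maxn (G i) s -> tle T m z -> tlt T z s -> False.
Proof.
  intros Mm Ms Hmz Hzs.
  assert (E : m = s) by (apply (max_le_max i); [exact Mm | exact Ms | right; exact (tle_tlt_trans HT Hmz Hzs)]).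
  subst m. exact (tlt_tle_asym HT Hzs Hmz).
Qed.

Lemma implant_not_node i x : Imp i x -> ~ nodes T x.
Proof. destruct (graft_of i) as [_ [_ [_ [_ [_ [_ Hi]]]]]]. apply Hi. Qed.

Lemma implant_not_supp i x : Imp i x -> ~ S x.
Proof. intros Ix [Tx _]. exact (implant_not_node i x Ix Tx). Qed.

Lemma implant_unique i j x : Imp i x -> Imp j x -> i = j.
Proof.
  intros Ix Jx. apply NNPP. intro Hij.
  destruct Hc as [_ [_ [_ Hp]]]. exact (proj1 (Hp i j Hij) x Ix Jx).
Qed.

Lemma roots_position i j : i <> j ->
  par T (r i) (r j) \/ upset T (maxn (G j)) (r i) \/ upset T (maxn (G i)) (r j).
Proof. intro Hij. destruct Hc as [_ [_ [_ Hp]]]. exact (proj2 (Hp i j Hij)). Qed.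

Lemma roots_neq i j : i <> j -> r i <> r j.
Proof.
  intros Hij E.
  destruct (roots_position i j Hij) as [[_ [_ [Hn _]]] | [[_ [m [Mm Hm]]] | [_ [m [Mm Hm]]]]].
  - apply Hn. left. exact E.
  - rewrite E in Hm. exact (tlt_tle_asym HT (root_lt_max j m Mm) Hm).
  - rewrite <- E in Hm. exact (tlt_tle_asym HT (root_lt_max i m Mm) Hm).
Qed.

Lemma root_supp i : S (r i).
Proof.
  split; [apply root_node|]. intros [j [Hlt Hnu]].
  destruct (classic (i = j)) as [<-|Hij]; [exact (tlt_irrefl HT Hlt)|].
  destruct (roots_position i j Hij) as [[_ [_ [_ Hn]]] | [Hu | [_ [m [Mm Hm]]]]].
  - apply Hn. right. exact Hlt.
  - exact (Hnu Hu).
  - apply (tlt_tle_asym HT (root_lt_max i m Mm)). right. exact (tle_tlt_trans HT Hm Hlt).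
Qed.

Lemma max_supp i m : maxn (G i) m -> S m.
Proof.
  intro Mm. pose proof (root_lt_max i m Mm) as Hrm. pose proof (proj2 (tlt_nodes HT Hrm)) as Tm.
  split; [exact Tm|]. intros [j [Hlt Hnu]].
  destruct (classic (i = j)) as [<-|Hij].
  { apply Hnu. split; [exact Tm|]. exists m. split; [exact Mm | left; reflexivity]. }
  destruct (roots_position i j Hij) as [[_ [_ [Hn1 Hn2]]] | [[_ [m' [Mm' Hm']]] | [_ [m' [Mm' Hm']]]]].
  - destruct (tlt_below_total HT Hrm Hlt) as [E|[E|E]].
    + apply Hn1. left. exact E.
    + apply Hn1. right. exact E.
    + apply Hn2. right. exact E.
  - apply Hnu. split; [exact Tm|]. exists m'. split; [exact Mm'|].
    right. exact (tle_tlt_trans HT Hm' Hrm).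
  - exact (max_le_lt_max i m' m (r j) Mm' Mm Hm' Hlt).
Qed.

Lemma upset_of_supp i z : S z -> tlt T (r i) z -> upset T (maxn (G i)) z.
Proof. intros [_ Hz] Hlt. apply NNPP. intro Hn. apply Hz. exists i. split; assumption. Qed.

Lemma supp_lt_unsupp y w : S y -> tlt T y w -> ~ S w ->
  exists j, tle T y (r j) /\ tlt T (r j) w.
Proof.
  intros [_ Sy] Hyw HnSw.
  assert (Hex : exists j, expl T (G j) (r j) w).
  { apply NNPP. intro Hn. apply HnSw. split; [exact (proj2 (tlt_nodes HT Hyw)) | exact Hn]. }
  destruct Hex as [j [Hjw Hnu]]. exists j. split; [|exact Hjw].
  destruct (tlt_below_total HT Hyw Hjw) as [E|[E|E]]; [left; exact E | right; exact E|].
  exfalso. apply Sy. exists j. split; [exact E|].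
  intros [_ [m [Mm Hmy]]]. apply Hnu. split; [exact (proj2 (tlt_nodes HT Hyw))|].
  exists m. split; [exact Mm | right; exact (tle_tlt_trans HT Hmy Hyw)].
Qed.

Lemma graft_node_cases i s : nodes (G i) s -> s = r i \/ maxn (G i) s \/ Imp i s.
Proof.
  intro Gs. destruct (classic (s = r i)) as [E|E]; [left; exact E | right].
  destruct (classic (maxn (G i) s)) as [M|M]; [left; exact M | right; split; auto].
Qed.

Lemma graft_lt_not_root i x s : tlt (G i) x s -> s <> r i.
Proof.
  intros Hxs E. subst s.
  exact (tlt_tle_asym (graft_tree i) Hxs (graft_root_le i x (proj1 (tlt_nodes (graft_tree i) Hxs)))).
Qed.

Lemma graft_root_lt i s : nodes (G i) s -> s <> r i -> tlt (G i) (r i) s.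
Proof. intros Gs Hs. destruct (graft_root_le i s Gs) as [E|L]; [congruence | exact L]. Qed.

Lemma graft_root_lt_max i m : maxn (G i) m -> tlt (G i) (r i) m.
Proof.
  intro Mm. apply graft_root_lt; [exact (proj1 Mm)|].
  intro E. apply (tlt_irrefl HT (x := m)). rewrite E at 1. exact (root_lt_max i m Mm).
Qed.

Lemma graft_between_implant i a w b : tlt (G i) a w -> tlt (G i) w b -> Imp i w.
Proof.
  intros Haw Hwb. split; [exact (proj2 (tlt_nodes (graft_tree i) Haw))|]. split.
  - exact (graft_lt_not_root i a w Haw).
  - intros [_ Hm]. apply Hm. exists b. exact Hwb.
Qed.

(** * The order of the hybrid *)

Ltac absurd_implant_supp :=
  exfalso; match goal with
  | H1 : impl _ _ ?z, H2 : supp _ _ _ ?z |- _ => exact (implant_not_supp _ _ H1 H2)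
  end.

Lemma hybr_lt_target x y : tlt H x y -> S y \/ exists i, Imp i y.
Proof.
  intros [[_ [Sy _]] | [[i [_ [Iy _]]] | [[i [_ [Iy _]]] | [[i [_ [Sy _]]] | [i [j [_ [_ [Jy _]]]]]]]]];
  eauto.
Qed.

Lemma hybr_lt_supp_supp x y : S x -> S y -> tlt H x y -> tlt T x y.
Proof.
  intros Sx Sy [[_ [_ h]] | [[i [Ix _]] | [[i [_ [Iy _]]] | [[i [Ix _]] | [i [j [_ [Ix _]]]]]]]];
  [exact h | absurd_implant_supp ..].
Qed.

Lemma hybr_lt_supp_implant x y j : S x -> Imp j y -> tlt H x y -> tle T x (r j).
Proof.
  intros Sx Jy [[_ [Sy _]] | [[i [Ix _]] | [[i [_ [Iy h]]] | [[i [Ix _]] | [i [k [_ [Ix _]]]]]]]];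
  try absurd_implant_supp.
  rewrite (implant_unique j i y Jy Iy). exact h.
Qed.

Lemma hybr_lt_implant_supp x y j : Imp j x -> S y -> tlt H x y ->
  exists m, maxn (G j) m /\ tle T m y /\ tlt (G j) x m.
Proof.
  intros Jx Sy [[Sx _] | [[i [_ [Iy _]]] | [[i [Sx _]] | [[i [Ix [_ [_ h]]]] | [i [k [_ [_ [Ky _]]]]]]]]];
  try absurd_implant_supp.
  rewrite (implant_unique j i x Jx Ix). exact h.
Qed.

Lemma hybr_lt_implant_same x y j : Imp j x -> Imp j y -> tlt H x y -> tlt (G j) x y.
Proof.
  intros Jx Jy [[Sx _] | [[i [Ix [_ h]]] | [[i [Sx _]] | [[i [_ [Sy _]]] | [i [k [ne [Ix [Ky _]]]]]]]]];
  try absurd_implant_supp.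
  - rewrite (implant_unique j i x Jx Ix). exact h.
  - exfalso. apply ne. rewrite <- (implant_unique j i x Jx Ix). exact (implant_unique j k y Jy Ky).
Qed.

Lemma hybr_lt_implant_diff x y i j : Imp i x -> Imp j y -> i <> j -> tlt H x y ->
  exists m, maxn (G i) m /\ tle T m (r j) /\ tlt (G i) x m.
Proof.
  intros Ix Jy ne [[Sx _] | [[k [Kx [Ky _]]] | [[k [Sx _]] | [[k [_ [Sy _]]] | [k [l [_ [Kx [Ly [_ h]]]]]]]]]];
  try absurd_implant_supp.
  - exfalso. apply ne. rewrite (implant_unique i k x Ix Kx). exact (implant_unique k j y Ky Jy).
  - rewrite (implant_unique i k x Ix Kx), (implant_unique j l y Jy Ly). exact h.
Qed.

Lemma hybr_node_supp x : S x -> nodes H x.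
Proof. intro Sx. left. exact Sx. Qed.

Lemma hybr_node_implant i x : Imp i x -> nodes H x.
Proof. intro Ix. right. exists i. exact Ix. Qed.

Lemma hybr_lt_of_supp x y : S x -> S y -> tlt T x y -> tlt H x y.
Proof. intros Sx Sy Hxy. left. auto. Qed.

Lemma hybr_lt_of_root x y j : S x -> Imp j y -> tle T x (r j) -> tlt H x y.
Proof. intros Sx Jy Hxr. right; right; left. exists j. auto. Qed.

Lemma hybr_lt_of_max x y j m :
  Imp j x -> S y -> maxn (G j) m -> tle T m y -> tlt (G j) x m -> tlt H x y.
Proof.
  intros Jx Sy Mm Hmy Hxm. right; right; right; left. exists j.
  split; [exact Jx|]. split; [exact Sy|].
  split; [split; [exact (proj1 Sy) | exists m; auto] | exists m; auto].
Qed.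

Lemma hybr_lt_of_implant x y j : Imp j x -> Imp j y -> tlt (G j) x y -> tlt H x y.
Proof. intros Jx Jy Hxy. right; left. exists j. auto. Qed.

(** * Sons in the hybrid *)

Lemma sons_hybr_supp y s : S y -> (forall i, y <> r i) -> (sons H y s <-> sons T y s).
Proof.
  intros Sy Hnr. split.
  - intros [[Ss | [j Js]] [Hys Hnb]].
    + split; [exact (proj1 Ss)|]. split; [exact (hybr_lt_supp_supp y s Sy Ss Hys)|].
      intros [w [Hyw Hws]]. apply Hnb.
      destruct (classic (S w)) as [Sw|HnSw].
      * exists w. split; apply hybr_lt_of_supp; assumption.
      * destruct (supp_lt_unsupp y w Sy Hyw HnSw) as [j [[E|Hyr] Hrw]]; [contradiction (Hnr j E)|].
        exists (r j). split; apply hybr_lt_of_supp; try apply root_supp; try assumption.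
        exact (tlt_trans HT Hrw Hws).
    + exfalso. destruct (hybr_lt_supp_implant y s j Sy Js Hys) as [E|Hyr]; [exact (Hnr j E)|].
      apply Hnb. exists (r j). split.
      * apply hybr_lt_of_supp; [exact Sy | apply root_supp | exact Hyr].
      * apply (hybr_lt_of_root _ _ j); [apply root_supp | exact Js | left; reflexivity].
  - intros [Ts [Hys Hnb]].
    assert (Ss : S s).
    { apply NNPP. intro HnSs.
      destruct (supp_lt_unsupp y s Sy Hys HnSs) as [j [[E|Hyr] Hrs]]; [exact (Hnr j E)|].
      apply Hnb. exists (r j). auto. }
    split; [exact (hybr_node_supp s Ss)|]. split; [exact (hybr_lt_of_supp y s Sy Ss Hys)|].
    intros [w [Hyw Hws]]. apply Hnb.
    destruct (hybr_lt_target y w Hyw) as [Sw | [j Jw]].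
    + exists w. split; [exact (hybr_lt_supp_supp y w Sy Sw Hyw) | exact (hybr_lt_supp_supp w s Sw Ss Hws)].
    + destruct (hybr_lt_supp_implant y w j Sy Jw Hyw) as [E|Hyr]; [contradiction (Hnr j E)|].
      destruct (hybr_lt_implant_supp w s j Jw Ss Hws) as [m [Mm [Hms _]]].
      exists (r j). split; [exact Hyr | exact (tlt_tle_trans HT (root_lt_max j m Mm) Hms)].
Qed.

Definition past_graft i w : Prop :=
  exists m, maxn (G i) m /\
    ((S w /\ tle T m w) \/ exists j, j <> i /\ Imp j w /\ tle T m (r j)).

Lemma max_past_graft i m : maxn (G i) m -> past_graft i m.
Proof. intro Mm. exists m. split; [exact Mm|]. left. split; [exact (max_supp i m Mm) | left; reflexivity]. Qed.

Lemma past_graft_of_max_lt i m w : maxn (G i) m -> tlt H m w -> past_graft i w.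
Proof.
  intros Mm Hmw. exists m. split; [exact Mm|].
  destruct (hybr_lt_target m w Hmw) as [Sw | [j Jw]].
  - left. split; [exact Sw | right; exact (hybr_lt_supp_supp m w (max_supp i m Mm) Sw Hmw)].
  - right. exists j. pose proof (hybr_lt_supp_implant m w j (max_supp i m Mm) Jw Hmw) as Hmr.
    split; [|split; [exact Jw | exact Hmr]].
    intros ->. exact (tlt_tle_asym HT (root_lt_max i m Mm) Hmr).
Qed.

Lemma past_graft_not_below i w s : past_graft i w -> tlt H w s -> nodes (G i) s -> False.
Proof.
  intros [m [Mm [[Sw Hmw] | [j [Hji [Jw Hmr]]]]]] Hws Gs;
  pose proof (root_lt_max i m Mm) as Him;
  destruct (graft_node_cases i s Gs) as [-> | [Ms | Is]].
  - apply (tlt_tle_asym HT Him). right.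
    exact (tle_tlt_trans HT Hmw (hybr_lt_supp_supp w (r i) Sw (root_supp i) Hws)).
  - exact (max_le_lt_max i m s w Mm Ms Hmw (hybr_lt_supp_supp w s Sw (max_supp i s Ms) Hws)).
  - exact (tlt_tle_asym HT Him (tle_trans HT Hmw (hybr_lt_supp_implant w s i Sw Is Hws))).
  - destruct (hybr_lt_implant_supp w (r i) j Jw (root_supp i) Hws) as [m' [Mm' [Hm'r _]]].
    apply (tlt_tle_asym HT Him). right.
    exact (tle_tlt_trans HT Hmr (tlt_tle_trans HT (root_lt_max j m' Mm') Hm'r)).
  - destruct (hybr_lt_implant_supp w s j Jw (max_supp i s Ms) Hws) as [m' [Mm' [Hm's _]]].
    exact (max_le_lt_max i m s (r j) Mm Ms Hmr (tlt_tle_trans HT (root_lt_max j m' Mm') Hm's)).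
  - destruct (hybr_lt_implant_diff w s j i Jw Is Hji Hws) as [m' [Mm' [Hm'r _]]].
    apply (tlt_tle_asym HT Him). right.
    exact (tle_tlt_trans HT Hmr (tlt_tle_trans HT (root_lt_max j m' Mm') Hm'r)).
Qed.

Lemma hybr_lt_of_graft_lt i x s : (x = r i \/ Imp i x) -> tlt (G i) x s -> tlt H x s.
Proof.
  intros Hx Hxs. pose proof (proj2 (tlt_nodes (graft_tree i) Hxs)) as Gs.
  destruct (graft_node_cases i s Gs) as [E | [Ms | Is]];
  [contradiction (graft_lt_not_root i x s Hxs E)| |];
  destruct Hx as [-> | Ix].
  - apply hybr_lt_of_supp; [apply root_supp | exact (max_supp i s Ms) | exact (root_lt_max i s Ms)].
  - apply (hybr_lt_of_max _ _ i s); [exact Ix | exact (max_supp i s Ms) | exact Ms | left; reflexivity | exact Hxs].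
  - apply (hybr_lt_of_root _ _ i); [apply root_supp | exact Is | left; reflexivity].
  - exact (hybr_lt_of_implant _ _ i Ix Is Hxs).
Qed.

Lemma hybr_lt_from_graft i x w : (x = r i \/ Imp i x) -> tlt H x w ->
  tlt (G i) x w \/ exists m, maxn (G i) m /\ tlt (G i) x m /\ tlt H m w.
Proof.
  intros Hx Hxw. destruct (hybr_lt_target x w Hxw) as [Sw | [j Jw]]; destruct Hx as [-> | Ix].
  - pose proof (hybr_lt_supp_supp _ w (root_supp i) Sw Hxw) as Hrw.
    destruct (upset_of_supp i w Sw Hrw) as [_ [m [Mm [<- | Hmw]]]].
    + left. exact (graft_root_lt_max i m Mm).
    + right. exists m. split; [exact Mm|]. split; [exact (graft_root_lt_max i m Mm)|].
      exact (hybr_lt_of_supp m w (max_supp i m Mm) Sw Hmw).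
  - destruct (hybr_lt_implant_supp x w i Ix Sw Hxw) as [m [Mm [[<- | Hmw] Hxm]]].
    + left. exact Hxm.
    + right. exists m. split; [exact Mm|]. split; [exact Hxm|].
      exact (hybr_lt_of_supp m w (max_supp i m Mm) Sw Hmw).
  - destruct (classic (j = i)) as [-> | Hji].
    + left. exact (graft_root_lt i w (proj1 Jw) (proj1 (proj2 Jw))).
    + assert (Hrr : tlt T (r i) (r j)).
      { destruct (hybr_lt_supp_implant _ w j (root_supp i) Jw Hxw) as [E|L]; [|exact L].
        contradiction (roots_neq i j (fun e => Hji (eq_sym e)) E). }
      destruct (upset_of_supp i (r j) (root_supp j) Hrr) as [_ [m [Mm Hmr]]].
      right. exists m. split; [exact Mm|]. split; [exact (graft_root_lt_max i m Mm)|].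
      exact (hybr_lt_of_root m w j (max_supp i m Mm) Jw Hmr).
  - destruct (classic (j = i)) as [-> | Hji].
    + left. exact (hybr_lt_implant_same x w i Ix Jw Hxw).
    + destruct (hybr_lt_implant_diff x w i j Ix Jw (fun e => Hji (eq_sym e)) Hxw) as [m [Mm [Hmr Hxm]]].
      right. exists m. split; [exact Mm|]. split; [exact Hxm|].
      exact (hybr_lt_of_root m w j (max_supp i m Mm) Jw Hmr).
Qed.

Lemma sons_hybr_graft i x s : (x = r i \/ Imp i x) -> (sons H x s <-> sons (G i) x s).
Proof.
  intro Hx. split.
  - intros [_ [Hxs Hnb]].
    destruct (hybr_lt_from_graft i x s Hx Hxs) as [HGxs | [m [Mm [Hxm Hms]]]].
    + split; [exact (proj2 (tlt_nodes (graft_tree i) HGxs))|]. split; [exact HGxs|].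
      intros [w [Hxw Hws]]. pose proof (graft_between_implant i x w s Hxw Hws) as Iw.
      apply Hnb. exists w.
      split; [exact (hybr_lt_of_graft_lt i x w Hx Hxw) | exact (hybr_lt_of_graft_lt i w s (or_intror Iw) Hws)].
    + exfalso. apply Hnb. exists m. split; [exact (hybr_lt_of_graft_lt i x m Hx Hxm) | exact Hms].
  - intros [Gs [Hxs Hnb]].
    split.
    { destruct (graft_node_cases i s Gs) as [E | [Ms | Is]].
      - contradiction (graft_lt_not_root i x s Hxs E).
      - exact (hybr_node_supp s (max_supp i s Ms)).
      - exact (hybr_node_implant i s Is). }
    split; [exact (hybr_lt_of_graft_lt i x s Hx Hxs)|].
    intros [w [Hxw Hws]].
    destruct (hybr_lt_from_graft i x w Hx Hxw) as [HGxw | [m [Mm [_ Hmw]]]].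
    + destruct (graft_node_cases i w (proj2 (tlt_nodes (graft_tree i) HGxw))) as [E | [Mw | Iw]].
      * contradiction (graft_lt_not_root i x w HGxw E).
      * exact (past_graft_not_below i w s (max_past_graft i w Mw) Hws Gs).
      * destruct (hybr_lt_from_graft i w s (or_intror Iw) Hws) as [HGws | [m [Mm [_ Hms]]]].
        -- apply Hnb. exists w. auto.
        -- exact (past_graft_not_below i m s (max_past_graft i m Mm) Hms Gs).
    + exact (past_graft_not_below i w s (past_graft_of_max_lt i m w Mm Hmw) Hws Gs).
Qed.

(** * Leaves of the hybrid *)

Lemma leaf_hybr_graft_son i x s p :
  sons (G i) x s -> leaf (fhybr F phi) s p -> leaf (fgt (phi i)) s p.
Proof.
  intros [Gs [Hxs _]] [Hl _].
  destruct (graft_node_cases i s Gs) as [E | [Ms | Is]].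
  - contradiction (graft_lt_not_root i x s Hxs E).
  - destruct Hl as [[j [Js _]] | [_ Fsp]].
    + contradiction (implant_not_node j s Js (proj1 (max_supp i s Ms))).
    + destruct Hc as [Hf _]. destruct (Hf i) as [_ [_ [_ Hmax]]]. exact (proj2 (Hmax s Ms p) Fsp).
  - destruct Hl as [[j [Js Gsp]] | [Ss _]].
    + rewrite (implant_unique i j s Is Js). exact Gsp.
    + contradiction (implant_not_supp i s Is Ss).
Qed.

Lemma leaf_hybr_supp_son y s p : sons T y s -> leaf (fhybr F phi) s p -> leaf F s p.
Proof.
  intros [Ts _] [[[j [Js _]] | [_ Fsp]] _]; [contradiction (implant_not_node j s Js Ts) | exact Fsp].
Qed.

(** * Shoots of the hybrid *)

Section Refinement.
Hypothesis Hne : nonempty_leaves (fhybr F phi).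
Context {p : P}.
Hypothesis Hnl : ~ loss F phi p.

Lemma shoots_into_at_graft i y :
  nonincreasing F -> preserves_shoots F (phi i) -> scope F p y ->
  (y = r i \/ expl T (G i) (r i) y) ->
  exists x, scope (fhybr F phi) p x /\ gg (shoot (fhybr F phi) x) (shoot F y).
Proof.
  intros Hni Hps [Ty Fyp] Hy.
  assert (Hry : tle T (r i) y) by (destruct Hy as [E | [L _]]; [left; symmetry; exact E | right; exact L]).
  assert (Grp : leaf (fgt (phi i)) (r i) p).
  { apply NNPP. intro Hn. apply Hnl. exists i. split; [exact (Hni _ _ (root_node i) Ty Hry p Fyp) | exact Hn]. }
  destruct (Hps p (ex_intro _ (r i) (conj (graft_root_node i) Grp)) y (conj Ty Fyp) Hy)
    as [x [[_ Gxp] [Hx Hgg]]].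
  exists x. split.
  - destruct Hx as [-> | Ix].
    + split; [exact (hybr_node_supp _ (root_supp i))|]. split; [|exact Hnl].
      right. split; [exact (root_supp i)|].
      destruct Hc as [Hf _]. destruct (Hf i) as [_ [_ [Hroot _]]]. exact (Hroot p Gxp).
    + split; [exact (hybr_node_implant i x Ix)|]. split; [|exact Hnl]. left. exists i. auto.
  - eapply gg_trans; [|exact Hgg]. apply shoot_gg_of_sons.
    + intro s. exact (sons_hybr_graft i x s Hx).
    + exact (leaf_hybr_graft_son i x).
    + intros s [Hs _]. exact (Hne s Hs).
Qed.

Lemma shoots_into_at_supp y :
  S y -> (forall i, y <> r i) -> leaf F y p ->
  exists x, scope (fhybr F phi) p x /\ gg (shoot (fhybr F phi) x) (shoot F y).
Proof.
  intros Sy Hnr Fyp. exists y. split.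
  - split; [exact (hybr_node_supp y Sy)|]. split; [right; split; assumption | exact Hnl].
  - apply shoot_gg_of_sons.
    + intro s. exact (sons_hybr_supp y s Sy Hnr).
    + exact (leaf_hybr_supp_son y).
    + intros s [Hs _]. exact (Hne s Hs).
Qed.

End Refinement.

End Hybrid.

Theorem mainTheorem13 (V P : Type) (F : FTree V P) (I : Type) (phi : I -> FGraft V P) :
  is_tree (skel F) ->
  nonincreasing F ->
  consistent_ffam F phi ->
  nonempty_leaves (fhybr F phi) ->
  (forall i, preserves_shoots F (phi i)) ->
  shoots_into (fhybr F phi) F.
Proof.
  intros HT Hni Hc Hne Hps p [_ [_ [_ Hnl]]] y [Ty Fyp].
  destruct (classic (exists i, y = fg0 (phi i) \/ expl (skel F) (skel (fgt (phi i))) (fg0 (phi i)) y))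
    as [[i Hi] | Hno].
  - exact (shoots_into_at_graft HT Hc Hne Hnl i y Hni (Hps i) (conj Ty Fyp) Hi).
  - apply (shoots_into_at_supp HT Hc Hne Hnl); [| | exact Fyp].
    + split; [exact Ty|]. intros [i Hi]. apply Hno. exists i. right. exact Hi.
    + intros i E. apply Hno. exists i. left. exact E.
Qed.
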